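(* Let $\phi_1,\dots,\phi_N\in\mathbb{R}^d$ (not all zero) and $\theta^*\in\mathbb{R}^d$; set $\pi_i^*=\sigma(\phi_i^\top\theta^* )$, and for $\theta\in\mathbb{R}^d$ set $\pi_i=\sigma(\phi_i^\top\theta)$ and $\mathcal{L}(\theta)=\frac1N\sum_{i=1}^N(\pi_i-\pi_i^* )^2$. Let $u(\theta)=\min_i\pi_i(1-\pi_i)$, $v=\min_i\pi_i^*(1-\pi_i^* )$, and $\lambda_\phi$ the smallest positive eigenvalue of $\frac1N\sum_i\phi_i\phi_i^\top$. Then for all $\theta\in\mathbb{R}^d$, $$\Big\|\frac{\partial\mathcal{L}(\theta)}{\partial\theta}\Big\|_2\ge 8\,u(\theta)\min\{u(\theta),v\}\sqrt{\lambda_\phi}\Big[\frac1N\sum_{i=1}^N(\pi_i-\pi_i^* )^2\Big]^{1/2}.$$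
   Context: $\sigma(z)=1/(1+e^{-z})$ is the sigmoid function. *)

From HB Require Import structures.
From mathcomp Require Import all_boot all_order all_algebra.
From mathcomp Require Import all_classical all_reals all_analysis.
Set Implicit Arguments. Unset Strict Implicit. Unset Printing Implicit Defensive.
Import Order.TTheory GRing.Theory Num.Theory.
Import numFieldNormedType.Exports.
Local Open Scope ring_scope.

Section Defs.
Variable R : realType.

Definition sigmoid (z : R) : R := 1 / (1 + expR (- z)).

Definition dotv (d : nat) (x y : 'cV[R]_d) : R := (x^T *m y) 0 0.

Definition norm2 (d : nat) (x : 'cV[R]_d) : R :=
  Num.sqrt (\sum_(j < d) x j 0 ^+ 2).

Definition sigpi (d N : nat) (phi : 'I_N -> 'cV[R]_d) (th : 'cV[R]_d) (i : 'I_N) : R :=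
  sigmoid (dotv (phi i) th).

Definition lossL (d N : nat) (phi : 'I_N -> 'cV[R]_d) (thstar th : 'cV[R]_d) : R :=
  N%:R^-1 * \sum_(i < N) (sigpi phi th i - sigpi phi thstar i) ^+ 2.

Definition gradv (d : nat) (f : 'cV[R]_d -> R) (th : 'cV[R]_d) : 'cV[R]_d :=
  \col_(j < d) derive f th (delta_mx j 0 : 'cV[R]_d).

(* u(theta) = min_i pi_i (1 - pi_i) ; min over a nonempty index set
   (the hypothesis "not all phi_i zero" forces N >= 1) *)
Definition minpi (d N : nat) (phi : 'I_N -> 'cV[R]_d) (th : 'cV[R]_d) : R :=
  \big[Num.min/1]_(i < N) (sigpi phi th i * (1 - sigpi phi th i)).

Definition gram (d N : nat) (phi : 'I_N -> 'cV[R]_d) : 'M[R]_d :=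
  N%:R^-1 *: \sum_(i < N) (phi i *m (phi i)^T).

End Defs.

(** Write [a_i = phi_i^T (theta - theta^* )] and [g] for the gradient.  By the
    mean value theorem [pi_i - pi_i^* = c_i a_i] with [min(u, v) <= c_i <= 1/4],
    so [g . (theta - theta^* ) = 2/N sum_i pi_i (1 - pi_i) c_i a_i^2 >= 2 u T / N]
    where [T = sum_i c_i a_i^2] dominates both [min(u, v) sum_i a_i^2] and
    [4 sum_i (pi_i - pi_i^* )^2].  The gradient lies in the row space of the
    Gram matrix [G], i.e. [g = G w]; Cauchy-Schwarz for the form of [G] and the
    spectral gap [lam w^T G w <= |G w|^2] give
    [lam (g . (theta - theta^* ))^2 <= |g|^2 sum_i a_i^2 / N], and the two
    estimates combine into the bound. *)

From HB Require Import structures.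
From mathcomp Require Import all_boot all_order all_algebra.
From mathcomp Require Import all_classical all_reals all_analysis.
From mathcomp Require Import ring lra complex sesquilinear spectral.
Import Order.TTheory GRing.Theory Num.Theory.
Import numFieldNormedType.Exports.
Local Open Scope ring_scope.
Set Implicit Arguments. Unset Strict Implicit. Unset Printing Implicit Defensive.

Lemma sqr_sum_mul_le (R : realDomainType) N (x y : 'I_N -> R) :
  (\sum_i x i * y i) ^+ 2 <= (\sum_i x i ^+ 2) * (\sum_i y i ^+ 2).
Proof.
pose f i j := x i ^+ 2 * y j ^+ 2 - x i * y i * (x j * y j).
have lagrange : \sum_i \sum_j (x i * y j - x j * y i) ^+ 2 =
    (\sum_i \sum_j f i j) *+ 2.
  rewrite mulr2n [X in _ + X]exchange_big -big_split /=.
  by apply: eq_bigr => i _; rewrite -big_split; apply: eq_bigr => j _; rewrite /f /=; ring.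
have double_sumE : \sum_i \sum_j f i j =
    (\sum_i x i ^+ 2) * (\sum_i y i ^+ 2) - (\sum_i x i * y i) ^+ 2.
  rewrite [in RHS]expr2 !big_distrlr -sumrB; apply: eq_bigr => i _.
  by rewrite -sumrB.
rewrite -subr_ge0 -double_sumE -(pmulrn_lge0 _ (ltn0Sn 1)) -lagrange.
by apply: sumr_ge0 => i _; apply: sumr_ge0 => j _; apply: sqr_ge0.
Qed.

Section RealSymmetricSpectrum.
Local Open Scope sesquilinear_scope.
Variable R : rcfType.
Local Notation toC := (real_complex R).

Lemma conj_real_complex (x : R) : (toC x)^* = toC x.
Proof. by apply: conj_Creal; rewrite complex_real. Qed.

Lemma eigenvalue_real_complex n (G : 'M[R]_n) (r : R) :
  eigenvalue (map_mx toC G) (toC r) -> eigenvalue G r.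
Proof. by rewrite !eigenvalue_root_char -map_char_poly fmorph_root. Qed.

Lemma eigenvalue_spectral_diag n (A : 'M[R[i]]_n) k :
  A \is normalmx -> eigenvalue A (spectral_diag A 0 k).
Proof.
move=> Anormal; set P := spectralmx A; set s := spectral_diag A.
have PPt : P *m P^t* = 1%:M by apply/unitarymxP/spectral_unitarymx.
have AE : A = P^t* *m diag_mx s *m P.
  by rewrite -invmx_unitary ?spectral_unitarymx //; exact/orthomx_spectralP.
have PA : P *m A = diag_mx s *m P by rewrite AE !mulmxA PPt mul1mx.
apply/eigenvalueP; exists (row k P).
  by rewrite -row_mul PA mul_diag_mx; apply/rowP => j; rewrite !mxE.
apply/eqP => /(congr1 (fun v : 'rV_n => v *m P^t*)); rewrite -row_mul PPt mul0mx.
by move/rowP/(_ k); rewrite !mxE eqxx; apply/eqP/oner_neq0.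
Qed.

Lemma mulmx_diag_quadE n (X : 'rV[R[i]]_n) (P : 'M[R[i]]_n) (e : 'rV[R[i]]_n) :
  (X *m (P^t* *m diag_mx e *m P) *m X^t*) 0 0 =
  \sum_k e 0 k * ((X *m P^t*) 0 k * ((X *m P^t*) 0 k)^*).
Proof.
have -> : X *m (P^t* *m diag_mx e *m P) *m X^t* =
    (X *m P^t*) *m diag_mx e *m (X *m P^t*)^t*.
  by rewrite trmx_mul map_mxM trmxCK !mulmxA.
by rewrite mxE; apply: eq_bigr => k _; rewrite mul_mx_diag !mxE mulrAC mulrC.
Qed.

Lemma spectral_gap_quad_le n (G : 'M[R]_n) (lam : R) :
  G^T = G -> 0 < lam -> (forall a, 0 < a -> eigenvalue G a -> lam <= a) ->
  forall x : 'rV[R]_n, lam * (x *m G *m x^T) 0 0 <= (x *m G *m G *m x^T) 0 0.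
Proof.
move=> Gsym lam_gt0 lam_min x.
(* Diagonalize [G] over [R[i]]; every eigenvalue [s] satisfies [lam * s <= s^2]. *)
pose A := map_mx toC G; pose X := map_mx toC x.
have At : A^t* = A.
  by apply/matrixP => i j; rewrite !mxE conj_real_complex -[in LHS]Gsym mxE.
have Aherm : A \is hermsymmx by apply/is_hermitianmxP; rewrite expr0 scale1r At.
have Anormal := hermitian_normalmx Aherm.
set P := spectralmx A; set s := spectral_diag A.
have PPt : P *m P^t* = 1%:M by apply/unitarymxP/spectral_unitarymx.
have AE : A = P^t* *m diag_mx s *m P.
  by rewrite -invmx_unitary ?spectral_unitarymx //; exact/orthomx_spectralP.
have AAE : A *m A = P^t* *m diag_mx (\row_k (s 0 k * s 0 k)) *m P.
  rewrite AE !mulmxA -[_ *m P *m P^t*]mulmxA PPt mulmx1.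
  by rewrite -[_ *m diag_mx s *m diag_mx s]mulmxA mulmx_diag.
have gap k : toC lam * s 0 k <= s 0 k * s 0 k.
  have sk_real : s 0 k \is Num.real.
    by have /mxOverP := hermitian_spectral_diag_real Aherm; apply.
  rewrite -(RRe_real sk_real); set r := complex.Re (s 0 k); rewrite -!rmorphM lecR.
  have [r_le0|r_gt0] := lerP r 0.
    by apply: (@le_trans _ _ 0); [rewrite pmulr_rle0 | rewrite -expr2 sqr_ge0].
  rewrite ler_pM2r // lam_min // eigenvalue_real_complex // /r (RRe_real sk_real).
  exact: eigenvalue_spectral_diag.
have Xt : X^t* = map_mx toC x^T by apply/matrixP => i j; rewrite !mxE conj_real_complex.
set Y := X *m P^t*.
have E1 : toC ((x *m G *m x^T) 0 0) = \sum_k s 0 k * (Y 0 k * (Y 0 k)^*).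
  by rewrite -mulmx_diag_quadE -AE Xt -!map_mxM [RHS]mxE.
have E2 : toC ((x *m G *m G *m x^T) 0 0) =
    \sum_k (\row_j (s 0 j * s 0 j)) 0 k * (Y 0 k * (Y 0 k)^*).
  by rewrite -mulmx_diag_quadE -AAE Xt mulmxA -!map_mxM [RHS]mxE.
rewrite -lecR rmorphM /= E1 E2 mulr_sumr; apply: ler_sum => k _.
by rewrite mxE mulrA; apply: ler_wpM2r; [exact: mul_conjC_ge0 | exact: gap].
Qed.

End RealSymmetricSpectrum.

Section Dot.
Variables (R : realType) (d : nat).
Implicit Types x y : 'cV[R]_d.

Lemma dotvC x y : dotv x y = dotv y x.
Proof. by rewrite /dotv !mxE; apply: eq_bigr => k _; rewrite !mxE mulrC. Qed.

Lemma dotv_mulmx x (A : 'M[R]_d) y : dotv x (A *m y) = (x^T *m A *m y) 0 0.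
Proof. by rewrite /dotv mulmxA. Qed.

Lemma dotvBr x y z : dotv x (y - z) = dotv x y - dotv x z.
Proof. by rewrite /dotv mulmxBr !mxE. Qed.

Lemma dotv_suml n (c : 'I_n -> R) (v : 'I_n -> 'cV[R]_d) y :
  dotv (\sum_i c i *: v i) y = \sum_i c i * dotv (v i) y.
Proof.
rewrite /dotv linear_sum mulmx_suml summxE; apply: eq_bigr => i _.
by rewrite linearZ -scalemxAl mxE.
Qed.

Lemma dotvv_ge0 x : 0 <= dotv x x.
Proof. by rewrite /dotv mxE sumr_ge0 // => j _; rewrite mxE -expr2 sqr_ge0. Qed.

Lemma norm2E x : norm2 x = Num.sqrt (dotv x x).
Proof.
by rewrite /norm2 /dotv mxE; congr Num.sqrt; apply: eq_bigr => j _; rewrite mxE expr2.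
Qed.

End Dot.

Section Gram.
Variables (R : realType) (d N : nat) (phi : 'I_N -> 'cV[R]_d).
Local Notation G := (gram phi).
Implicit Types x y : 'cV[R]_d.

Lemma gram_tr : G^T = G.
Proof.
rewrite /gram linearZ linear_sum /=; congr (_ *: _).
by apply: eq_bigr => i _; rewrite trmx_mul trmxK.
Qed.

Lemma gram_dotE x y :
  dotv x (G *m y) = N%:R^-1 * \sum_i dotv (phi i) x * dotv (phi i) y.
Proof.
rewrite /gram -scalemxAl /dotv -scalemxAr mxE mulmx_suml mulmx_sumr summxE.
congr (_ * _); apply: eq_bigr => i _.
rewrite !mulmxA -(mulmxA (x^T *m phi i)) mxE big_ord1.
by congr (_ * _); exact: dotvC.
Qed.

Lemma gram_dot_sqrE y : dotv y (G *m y) = N%:R^-1 * \sum_i dotv (phi i) y ^+ 2.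
Proof. by rewrite gram_dotE; congr (_ * _); apply: eq_bigr => i _; rewrite expr2. Qed.

Lemma gram_dot_ge0 y : 0 <= dotv y (G *m y).
Proof.
by rewrite gram_dot_sqrE mulr_ge0 ?invr_ge0 ?ler0n ?sumr_ge0 // => i _; rewrite sqr_ge0.
Qed.

Lemma row_gram_sub i : ((phi i)^T <= G)%MS.
Proof.
have N_gt0 : (0 < N)%N by case: N phi i => [|n] _ [].
rewrite submxE; apply/eqP/matrixP => z j; rewrite ord1 [RHS]mxE.
set k := col j (cokermx G).
have -> : ((phi i)^T *m cokermx G) 0 j = dotv (phi i) k.
  by rewrite /dotv !mxE; apply: eq_bigr => l _; rewrite !mxE.
have : dotv k (G *m k) = 0 by rewrite /k colE mulmxA mulmx_coker mul0mx /dotv mulmx0 mxE.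
rewrite gram_dotE => /eqP; rewrite mulf_eq0 invr_eq0 pnatr_eq0 (negPf (lt0n_neq0 N_gt0)) /=.
move=> /eqP/psumr_eq0P sum_eq0; apply/eqP.
by rewrite -[_ == 0]orbb -mulf_eq0 sum_eq0 // => l _; rewrite -expr2 sqr_ge0.
Qed.

Lemma gram_range_dot_sqr_le (lam : R) (g : 'cV[R]_d) :
  0 < lam -> (forall a, 0 < a -> eigenvalue G a -> lam <= a) -> (g^T <= G)%MS ->
  forall y, lam * dotv g y ^+ 2 <= dotv g g * dotv y (G *m y).
Proof.
move=> lam_gt0 lam_min /submxP[W gW] y.
have gE : g = G *m W^T by rewrite -[g]trmxK gW trmx_mul gram_tr.
have gap : lam * dotv W^T (G *m W^T) <= dotv g g.
  rewrite gE !dotv_mulmx trmx_mul gram_tr trmxK.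
  exact: spectral_gap_quad_le gram_tr lam_gt0 lam_min W.
have -> : dotv g y = dotv W^T (G *m y).
  by rewrite gE dotv_mulmx /dotv trmx_mul gram_tr trmxK.
apply: le_trans (ler_wpM2r (gram_dot_ge0 y) gap).
rewrite -mulrA; apply: ler_wpM2l; first exact: ltW.
rewrite !gram_dotE exprMn [X in _ <= X]mulrACA -expr2; apply: ler_wpM2l; first exact: sqr_ge0.
have sqrE (f : 'I_N -> R) : \sum_i f i * f i = \sum_i f i ^+ 2.
  by apply: eq_bigr => i _; rewrite expr2.
by rewrite !sqrE; exact: sqr_sum_mul_le.
Qed.

End Gram.

Lemma mulr_subr_le_quarter (R : realFieldType) (x : R) : x * (1 - x) <= 1/4.
Proof. by have := sqr_ge0 (x - 1/2); rewrite expr2; nra. Qed.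

Lemma min_mulr_subr_le (R : realFieldType) (x y z : R) : x <= y <= z ->
  Num.min (x * (1 - x)) (z * (1 - z)) <= y * (1 - y).
Proof.
case/andP=> xy yz; rewrite ge_min; apply/orP.
by case: (lerP (x + y) 1) => h; [left | right]; nra.
Qed.

Section Sigmoid.
Local Open Scope classical_set_scope.
Variable R : realType.
Implicit Types x y z : R.

Lemma sigmoidE z : sigmoid z = (1 + expR (- z))^-1.
Proof. by rewrite /sigmoid div1r. Qed.

Lemma sigmoid_gt0 z : 0 < sigmoid z.
Proof. by rewrite sigmoidE invr_gt0 addr_gt0 ?expR_gt0. Qed.

Lemma sigmoid_lt1 z : sigmoid z < 1.
Proof. by rewrite sigmoidE invf_lt1 ?addr_gt0 ?expR_gt0 // ltrDl expR_gt0. Qed.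

Lemma sigmoid_le : {homo @sigmoid R : x y / x <= y}.
Proof.
move=> x y xy; rewrite !sigmoidE lef_pV2 ?posrE ?addr_gt0 ?expR_gt0 //.
by rewrite lerD2l ler_expR lerN2.
Qed.

Lemma is_derive_sigmoid x :
  is_derive x (1 : R) (@sigmoid R) (sigmoid x * (1 - sigmoid x)).
Proof.
rewrite (_ : @sigmoid R = fun z => (1 + expR (- z))^-1); last exact/funext/sigmoidE.
have den_neq0 : 1 + expR (- x) != 0 by rewrite gt_eqF ?addr_gt0 ?expR_gt0.
have den_derive : is_derive x (1 : R) (cst 1 + expR \o -%R) (0 + expR (- x) * -1).
  exact: is_deriveD (is_derive_cst _ _ _) (is_derive1_comp (is_derive_expR _) (is_deriveNid x 1)).
apply: is_derive_eq (@is_deriveV _ (cst 1 + expR \o -%R) x _ _ den_neq0 den_derive) _.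
rewrite /GRing.scale /=; change ((cst 1 + expR) (- x)) with (1 + expR (- x)).
by field.
Qed.

Lemma sigmoid_secant z1 z2 : exists2 c,
  Num.min (sigmoid z1 * (1 - sigmoid z1)) (sigmoid z2 * (1 - sigmoid z2)) <= c <= 1/4
  & sigmoid z1 - sigmoid z2 = c * (z1 - z2).
Proof.
wlog z21 : z1 z2 / z2 <= z1.
  move=> secant; have [|/ltW z12] := lerP z2 z1; first exact: secant.
  have [c cbounds E] := secant _ _ z12.
  by exists c; rewrite 1?minC // -opprB E -mulrN opprB.
have sigmoid_cont : {within `[z2, z1], continuous (@sigmoid R)}.
  apply/continuous_subspaceT => x; apply/differentiable_continuous.
  by apply/derivable1_diffP; case: (is_derive_sigmoid x).
have [c /andP[z2c cz1] E] := MVT_segment z21 (fun x _ => is_derive_sigmoid x) sigmoid_cont.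
exists (sigmoid c * (1 - sigmoid c)) => //.
by rewrite mulr_subr_le_quarter minC min_mulr_subr_le ?sigmoid_le.
Qed.

End Sigmoid.

Section MinPi.
Variables (R : realType) (d N : nat) (phi : 'I_N -> 'cV[R]_d) (th : 'cV[R]_d).

Lemma minpi_le i : minpi phi th <= sigpi phi th i * (1 - sigpi phi th i).
Proof. by rewrite /minpi (bigD1 i) //= ge_min lexx. Qed.

Lemma minpi_ge0 : 0 <= minpi phi th.
Proof.
rewrite /minpi; apply: (big_ind (fun x : R => 0 <= x)) => // [x y x_ge0 y_ge0|i _].
  by rewrite le_min x_ge0.
by rewrite mulr_ge0 ?subr_ge0 ?(ltW (sigmoid_gt0 _)) ?(ltW (sigmoid_lt1 _)).
Qed.

End MinPi.

Section Gradient.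
Variables (R : realType) (d N : nat) (phi : 'I_N -> 'cV[R]_d) (thstar : 'cV[R]_d).

Lemma derive_along_line (f : 'cV[R]_d -> R) (a v : 'cV[R]_d) :
  derive f a v = derive1 (fun h : R => f (h *: v + a)) 0.
Proof.
rewrite /derive1 /derive /= scale0r add0r.
by under [in RHS]eq_fun do rewrite addr0.
Qed.

Lemma dotv_lineE (x v a : 'cV[R]_d) (h : R) : dotv x (h *: v + a) = h * dotv x v + dotv x a.
Proof. by rewrite /dotv mulmxDr -scalemxAr !mxE. Qed.

Lemma dotv_delta (x : 'cV[R]_d) j : dotv x (delta_mx j 0) = x j 0.
Proof.
rewrite /dotv mxE (bigD1 j) //= !mxE !eqxx mulr1 big1 ?addr0 // => k /negPf kj.
by rewrite !mxE kj mulr0.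
Qed.

Lemma is_derive_sqr_sigmoid_affine (a b c : R) :
  is_derive (0 : R) (1 : R) (fun h => (sigmoid (h * b + a) - c) ^+ 2)
    (2 * (sigmoid a - c) * (sigmoid a * (1 - sigmoid a) * b)).
Proof.
rewrite (_ : (fun h => _) = (@sigmoid R \o (id * cst b + cst a) - cst c) ^+ 2) //.
have affine := is_deriveD
  (is_deriveM (is_derive_id (0 : R) (1 : R)) (is_derive_cst b (0 : R) (1 : R)))
  (is_derive_cst a (0 : R) (1 : R)).
apply: is_derive_eq (is_deriveX 2 (is_deriveB (is_derive1_comp (is_derive_sigmoid _) affine)
  (is_derive_cst c (0 : R) (1 : R)))) _.
have at0 : (id * cst b + cst a) (0 : R) = a by change (0 * b + a = a); rewrite mul0r add0r.
have -> : (@sigmoid R \o (id * cst b + cst a) - cst c) 0 = sigmoid a - c.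
  exact: (congr1 (fun t => sigmoid t - c) at0).
by rewrite /= /GRing.scale /= at0; ring.
Qed.

Lemma gradv_lossL (th : 'cV[R]_d) :
  gradv (lossL phi thstar) th = \sum_i (N%:R^-1 * (2 * (sigpi phi th i - sigpi phi thstar i)
    * (sigpi phi th i * (1 - sigpi phi th i)))) *: phi i.
Proof.
apply/matrixP => j k; rewrite ord1 mxE derive_along_line derive1E summxE.
have loss_line : (fun h => lossL phi thstar (h *: delta_mx j 0 + th)) =
    N%:R^-1 *: \sum_i (fun h => (sigmoid (h * phi i j 0 + dotv (phi i) th)
                                 - sigpi phi thstar i) ^+ 2).
  apply/funext => h; rewrite /lossL fct_sumE /GRing.scale /=; congr (_ * _).
  by apply: eq_bigr => i _; rewrite /sigpi dotv_lineE dotv_delta.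
rewrite loss_line.
have [_ ->] := is_deriveZ N%:R^-1 (is_derive_sum (fun i =>
  is_derive_sqr_sigmoid_affine (dotv (phi i) th) (phi i j 0) (sigpi phi thstar i))).
by rewrite /GRing.scale /= mulr_sumr; apply: eq_bigr => i _; rewrite !mxE /sigpi; ring.
Qed.

Lemma gradv_lossL_sub_gram th : ((gradv (lossL phi thstar) th)^T <= gram phi)%MS.
Proof.
rewrite gradv_lossL linear_sum; apply/summx_sub => i _.
by rewrite linearZ; apply/scalemx_sub/row_gram_sub.
Qed.

End Gradient.

(* In the application [s] is the gradient dotted with [theta - theta^*], [T] the
   secant sum [sum_i c_i a_i^2], and [A], [E] the two sums of squares. *)
Lemma sqr_lower_bound_arith (R : realFieldType) (Ni lam u m E T A s GG : R) :
  0 < Ni -> 0 < lam -> 0 <= u -> 0 <= m -> 0 <= E -> 0 <= GG ->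
  m * A <= T -> 4 * E <= T -> 2 * Ni * u * T <= s -> lam * s ^+ 2 <= GG * (Ni * A) ->
  16 * Ni * lam * u ^+ 2 * m * E <= GG.
Proof.
move=> Ni_gt0 lam_gt0 u_ge0 m_ge0 E_ge0 GG_ge0 mA_le_T E_le_T T_le_s s_le.
have c_ge0 : 0 <= 4 * lam * Ni * u ^+ 2 * m.
  by rewrite !mulr_ge0 ?sqr_ge0 ?(ltW lam_gt0) ?(ltW Ni_gt0).
have [T_le0|T_gt0] := lerP T 0.
  have -> : E = 0 by apply/le_anti/andP; split; lra.
  by rewrite mulr0.
suff : 4 * lam * Ni * u ^+ 2 * m * T <= GG by nra.
rewrite -(ler_pM2r T_gt0); apply: le_trans (_ : GG * (m * A) <= _); last first.
  exact: ler_wpM2l.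
have lhs_ge0 : 0 <= 2 * Ni * u * T by rewrite !mulr_ge0 ?(ltW Ni_gt0) ?(ltW T_gt0).
have sqr_le : (2 * Ni * u * T) ^+ 2 <= s ^+ 2.
  by rewrite ler_sqr ?nnegrE // (le_trans lhs_ge0 T_le_s).
rewrite -(ler_pM2l Ni_gt0); apply: le_trans (_ : m * (lam * s ^+ 2) <= _).
  rewrite (_ : Ni * _ = m * (lam * (2 * Ni * u * T) ^+ 2)); last by ring.
  by apply: ler_wpM2l => //; apply: ler_wpM2l; first exact: ltW.
rewrite (_ : Ni * _ = m * (GG * (Ni * A))); last by ring.
exact: ler_wpM2l.
Qed.

Lemma sqrt_lower_bound_arith (R : rcfType) (Ni lam u m E GG : R) :
  0 <= Ni -> 0 <= lam -> 0 <= u -> 0 <= m -> m <= 1/4 -> 0 <= E ->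
  16 * Ni * lam * u ^+ 2 * m * E <= GG ->
  8 * u * m * Num.sqrt lam * Num.sqrt (Ni * E) <= Num.sqrt GG.
Proof.
move=> Ni_ge0 lam_ge0 u_ge0 m_ge0 m_le E_ge0 le_GG.
rewrite -[8 * u * m]ger0_norm ?mulr_ge0 // -sqrtr_sqr -!sqrtrM ?mulr_ge0 ?sqr_ge0 ?sqrtr_ge0 //.
apply: ler_wsqrtr; apply: le_trans le_GG.
have : 0 <= Ni * lam * u ^+ 2 * m * E by rewrite !mulr_ge0 ?sqr_ge0.
nra.
Qed.

Section LossGradient.
Variables (R : realType) (d N : nat) (phi : 'I_N -> 'cV[R]_d) (thstar th : 'cV[R]_d).
Local Notation p := (sigpi phi th).
Local Notation q := (sigpi phi thstar).
Local Notation u := (minpi phi th).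
Local Notation m := (Num.min (minpi phi th) (minpi phi thstar)).
Local Notation a i := (dotv (phi i) (th - thstar)).

Lemma sigpi_secant i : exists2 c, m <= c <= 1/4 & p i - q i = c * a i.
Proof.
have [c /andP[c_ge c_le] pq] := sigmoid_secant (dotv (phi i) th) (dotv (phi i) thstar).
exists c; last by rewrite /sigpi pq -dotvBr.
rewrite c_le andbT (le_trans _ c_ge) // le_min !ge_min.
by rewrite (minpi_le phi th i) (minpi_le phi thstar i) orbT.
Qed.

Lemma secant_sum_bounds :
  m * \sum_i a i ^+ 2 <= \sum_i (p i - q i) * a i /\
  4 * \sum_i (p i - q i) ^+ 2 <= \sum_i (p i - q i) * a i.
Proof.
have m_ge0 : 0 <= m by rewrite le_min !minpi_ge0.
rewrite !mulr_sumr; split; apply: ler_sum => i _;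
  have [c /andP[m_le_c c_le] ->] := sigpi_secant i;
  rewrite [X in _ <= X](_ : _ = c * a i ^+ 2); try ring.
- by apply: ler_wpM2r; first exact: sqr_ge0.
- rewrite [X in X <= _](_ : _ = 4 * c * (c * a i ^+ 2)); last by ring.
  rewrite -[X in _ <= X]mul1r; apply: ler_wpM2r; last by lra.
  by rewrite mulr_ge0 ?sqr_ge0 ?(le_trans m_ge0 m_le_c).
Qed.

Lemma gradv_lossL_dot_ge :
  2 * N%:R^-1 * u * \sum_i (p i - q i) * a i <=
  dotv (gradv (lossL phi thstar) th) (th - thstar).
Proof.
have m_ge0 : 0 <= m by rewrite le_min !minpi_ge0.
rewrite gradv_lossL dotv_suml mulr_sumr; apply: ler_sum => i _.
have [c /andP[m_le_c _] ->] := sigpi_secant i.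
rewrite [X in X <= _](_ : _ = 2 * N%:R^-1 * (c * a i ^+ 2) * u); last by ring.
rewrite [X in _ <= X](_ : _ = 2 * N%:R^-1 * (c * a i ^+ 2) * (p i * (1 - p i))); last by ring.
apply: ler_wpM2l (minpi_le phi th i).
have ca2_ge0 : 0 <= c * a i ^+ 2 by rewrite mulr_ge0 ?sqr_ge0 // (le_trans m_ge0 m_le_c).
by apply: mulr_ge0 ca2_ge0; rewrite mulr_ge0 ?invr_ge0.
Qed.

End LossGradient.

Unset Implicit Arguments.
Theorem lemma9 (R : realType) (d N : nat) (phi : 'I_N -> 'cV[R]_d)
  (thstar : 'cV[R]_d) (lam : R)
  (hphi : exists i, phi i != 0)
  (hlam_pos : 0 < lam)
  (hlam_eig : eigenvalue (gram phi) lam)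
  (hlam_min : forall a : R, 0 < a -> eigenvalue (gram phi) a -> lam <= a) :
  forall th : 'cV[R]_d,
    norm2 (gradv (lossL phi thstar) th) >=
      8 * minpi phi th * Num.min (minpi phi th) (minpi phi thstar)
        * Num.sqrt lam
        * Num.sqrt (N%:R^-1 * \sum_(i < N) (sigpi phi th i - sigpi phi thstar i) ^+ 2).
Proof.
move=> th; have [i0 _] := hphi.
have Ni_gt0 : 0 < (N%:R : R)^-1 by rewrite invr_gt0 ltr0n (leq_ltn_trans _ (ltn_ord i0)).
have u_ge0 := minpi_ge0 phi th.
have m_ge0 : 0 <= Num.min (minpi phi th) (minpi phi thstar) by rewrite le_min u_ge0 minpi_ge0.
have m_le : Num.min (minpi phi th) (minpi phi thstar) <= 1/4.
  by rewrite ge_min (le_trans (minpi_le phi th i0)) ?mulr_subr_le_quarter.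
have [mA_le_T E_le_T] := secant_sum_bounds phi thstar th.
have := gram_range_dot_sqr_le hlam_pos hlam_min (gradv_lossL_sub_gram phi thstar th) (th - thstar).
rewrite gram_dot_sqrE norm2E => gap.
have E_ge0 : 0 <= \sum_i (sigpi phi th i - sigpi phi thstar i) ^+ 2.
  by apply: sumr_ge0 => i _; exact: sqr_ge0.
apply: (sqrt_lower_bound_arith (ltW Ni_gt0) (ltW hlam_pos) u_ge0 m_ge0 m_le E_ge0).
exact: sqr_lower_bound_arith Ni_gt0 hlam_pos u_ge0 m_ge0 E_ge0 (dotvv_ge0 _) mA_le_T E_le_T
  (gradv_lossL_dot_ge phi thstar th) gap.
Qed.
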